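(* Let $\tau$ be a trace on $\widehat{TL}_3(q)$, let $X=g_{\sigma_2}g_{\sigma_1}g_{a_3}$, $u=g_{\sigma_2}g_{a_3}g_{\sigma_2}^{-1}$, and let $r\le s$ be positive integers. Then there exist an integer $0\le h\le s$, elements $c_0,\dots,c_h\in B$ and finitely many Markov elements $M_i$ such that $$\tau\Big(g_{a_3}\,u\,(g_{\sigma_1}u)^{s}\,g_{a_3}\,(g_{\sigma_1}u)^{r}\Big)=\tau\Big(\sum_{j=0}^{h}c_jX^{j}+\sum_iM_i\Big).$$
   Context: $K$ is an integral domain of characteristic $0$, $q\in K$ invertible and a square, $q+1$ invertible. $\widehat{TL}_3(q)$ is the unital $K$-algebra generated by $g_{\sigma_1},g_{\sigma_2},g_{a_3}$ with relations $g_{\sigma_1}g_{\sigma_2}g_{\sigma_1}=g_{\sigma_2}g_{\sigma_1}g_{\sigma_2}$, $g_{\sigma_i}g_{a_3}g_{\sigma_i}=g_{a_3}g_{\sigma_i}g_{a_3}$ ($i=1,2$), $x^2=(q-1)x+q$ for each generator $x$, and $V(g_{\sigma_1},g_{\sigma_2})=V(g_{\sigma_1},g_{a_3})=V(g_{\sigma_2},g_{a_3})=0$ where $V(x,y)=xyx+xy+yx+x+y+1$. $B$ is the unital subalgebra generated by $g_{\sigma_1}$ and $u$. A Markov element is an element $A\,g_{\sigma_2}^{\epsilon}A'$ with $A,A'\in B$, $\epsilon\in\{0,1\}$. A trace is a $K$-linear map $\tau:\widehat{TL}_3(q)\to K$ with $\tau(xy)=\tau(yx)$. *)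

From HB Require Import structures.
From mathcomp Require Import all_boot all_order all_algebra.
Set Implicit Arguments. Unset Strict Implicit. Unset Printing Implicit Defensive.
Import GRing.Theory.
Local Open Scope ring_scope.

Section TL.
Variables (K : idomainType) (A : algType K) (q : K).

Definition Vrel (x y : A) : A := x * y * x + x * y + y * x + x + y + 1.

(* inverse of a generator x satisfying x^2 = (q-1)x + q :
   x^{-1} = q^{-1} (x - (q-1)) *)
Definition ginv (x : A) : A := q^-1 *: (x - (q - 1)%:A).

Inductive in_subalg2 (a b : A) : A -> Prop :=
  | sub_one : in_subalg2 a b 1
  | sub_a : in_subalg2 a b a
  | sub_b : in_subalg2 a b b
  | sub_add x y : in_subalg2 a b x -> in_subalg2 a b y -> in_subalg2 a b (x + y)
  | sub_scale (c : K) x : in_subalg2 a b x -> in_subalg2 a b (c *: x)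
  | sub_mul x y : in_subalg2 a b x -> in_subalg2 a b y -> in_subalg2 a b (x * y).

Definition markov (a b g : A) (m : A) : Prop :=
  exists x y (eps : bool), in_subalg2 a b x /\ in_subalg2 a b y /\
    m = x * g ^+ eps * y.

(* the defining relations of hat-TL_3(q) on g1 = g_{sigma_1}, g2 = g_{sigma_2}, g3 = g_{a_3} *)
Definition TL3_rels (g1 g2 g3 : A) : Prop :=
  [/\ g1 * g2 * g1 = g2 * g1 * g2,
      g1 * g3 * g1 = g3 * g1 * g3,
      g2 * g3 * g2 = g3 * g2 * g3,
      (forall x, x \in [:: g1; g2; g3] -> x ^+ 2 = (q - 1) *: x + q%:A)
    & [/\ Vrel g1 g2 = 0, Vrel g1 g3 = 0 & Vrel g2 g3 = 0]].

Definition is_trace (tau : A -> K) : Prop :=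
  (forall (c : K) x y, tau (c *: x + y) = c * tau x + tau y) /\
  (forall x y, tau (x * y) = tau (y * x)).

End TL.

From HB Require Import structures.
From mathcomp Require Import all_boot all_order all_algebra.
From mathcomp Require Import ring zify.
Import GRing.Theory.
Local Open Scope ring_scope.
Set Implicit Arguments. Unset Strict Implicit. Unset Printing Implicit Defensive.

(* With e_i = g_i + 1 the relations read e_i^2 = (q + 1) e_i and
   e_i e_j e_i = q e_i, and e3 can be written through e2 and u + 1 in B
   ([e3_from_eu]).  Substituting this for g3 and using the trace property,
   the trace of the word becomes a combination of traces of Markov elements
   and of corners e2 a e2.  Right multiplication by the generators keeps
   e2 A in the span of the Y_j, Y_j e1, Y_j e3 (j in Z), where
   Y_j = e2 (e1 e3 e2)^j for j >= 0 and Y_j is q^(3j) e2 (e3 e1 e2)^(-j)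
   for j < 0, so the corners reduce to the tau (Y_j).  These are Markov
   traces by induction on |j|: for P = g1 u in B the increments of e2 P^n
   (n in Z) are multiples of W_n with W_j e2 = Y_j + q^2 Y_(j-1), while the
   tau (e2 P^n e2) are Markov traces.  So the part in powers of X can be
   taken to be 0 (h = 0). *)

Section LinearCombination.
Variables (K : nzRingType) (V : lmodType K).

Definition lincomb (l : seq V) (p : {poly K}) : V := \sum_(i < size l) p`_i *: l`_i.

Lemma lincombD l p p' : lincomb l p + lincomb l p' = lincomb l (p + p').
Proof. by rewrite /lincomb -big_split; apply: eq_bigr => i _; rewrite coefD scalerDl. Qed.

Lemma lincombN l p : - lincomb l p = lincomb l (- p).
Proof. by rewrite /lincomb -sumrN; apply: eq_bigr => i _; rewrite coefN scaleNr. Qed.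

Lemma lincombB l p p' : lincomb l p - lincomb l p' = lincomb l (p - p').
Proof. by rewrite lincombN lincombD. Qed.

Lemma lincombZ l c p : c *: lincomb l p = lincomb l (c%:P * p).
Proof. by rewrite /lincomb scaler_sumr; apply: eq_bigr => i _; rewrite coefCM scalerA. Qed.

Lemma lincomb0 l : 0 = lincomb l 0.
Proof. by rewrite /lincomb big1 // => i _; rewrite coef0 scale0r. Qed.

Lemma lincombXn l i : (i < size l)%N -> lincomb l 'X^i = l`_i.
Proof.
move=> lt_il; rewrite /lincomb (bigD1 (Ordinal lt_il)) //= coefXn eqxx scale1r.
rewrite big1 ?addr0 // => j ne_ji; rewrite coefXn; case: eqP => [ji|]; last by rewrite scale0r.
by case/eqP: ne_ji; apply: val_inj.
Qed.

End LinearCombination.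

(* An equation between K-linear combinations of the [atoms] becomes an
   equation between their coefficient polynomials, which [ring] can prove.
   Atoms are rewritten in list order, so a product must precede its factors. *)
Ltac lincomb_atoms L l i :=
  match l with
  | [::] => idtac
  | ?a :: ?l' =>
      first [ rewrite (_ : a = lincomb L 'X^i); [ | by rewrite lincombXn ] | idtac ];
      lincomb_atoms L l' (S i)
  end.
Ltac linearize atoms :=
  let L := fresh "L" in pose L := atoms;
  lincomb_atoms L atoms 0%N;
  rewrite ?(lincombD, lincombN, lincombB, lincombZ);
  rewrite ?[0](lincomb0 L);
  congr (lincomb L _).

Section Generator.
Variables (K : idomainType) (q : K) (A : algType K).

Lemma shift_sq (x : A) : x ^+ 2 = (q - 1) *: x + q%:A ->
  (x + 1) * (x + 1) = (q + 1) *: (x + 1).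
Proof.
move=> x_sq; rewrite mulrDl mulrDr mul1r mulr1 -expr2 x_sq.
by linearize [:: x; (1 : A)]; ring.
Qed.

Lemma Vrel_sym (x y : A) : x * y * x = y * x * y -> Vrel x y = 0 -> Vrel y x = 0.
Proof.
move=> braid V0; rewrite -V0 /Vrel braid.
by linearize [:: y * x * y; x * y; y * x; x; y; (1 : A)]; ring.
Qed.

Lemma shift_tri (x y : A) : x ^+ 2 = (q - 1) *: x + q%:A -> Vrel x y = 0 ->
  (x + 1) * (y + 1) * (x + 1) = q *: (x + 1).
Proof.
move=> x_sq V0.
have xyx : x * y * x = - (x * y + y * x + x + y + 1).
  apply/eqP; rewrite -addr_eq0 -V0 /Vrel; apply/eqP.
  by linearize [:: x * y * x; x * y; y * x; x; y; (1 : A)]; ring.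
rewrite !(mulrDl, mulrDr, mul1r, mulr1) -expr2 xyx x_sq.
by linearize [:: x * y; y * x; x; y; (1 : A)]; ring.
Qed.

Lemma mul_sq_scale (x : A) d : x * x = d *: x -> forall z, z * x * x = d *: (z * x).
Proof. by move=> x_sq z; rewrite -mulrA x_sq scalerAr. Qed.

Lemma mul_tri_scale (x y : A) d : x * y * x = d *: x ->
  forall z, z * x * y * x = d *: (z * x).
Proof. by move=> xyx z; rewrite -!mulrA (mulrA x) xyx scalerAr. Qed.

Lemma conj_quadratic (x y y' : A) : y' * y = 1 -> y * y' = 1 ->
  x ^+ 2 = (q - 1) *: x + q%:A -> (y * x * y') ^+ 2 = (q - 1) *: (y * x * y') + q%:A.
Proof.
move=> y'y yy' x_sq.
rewrite expr2 -!mulrA (mulrA y' y) y'y mul1r (mulrA x x) -expr2 x_sq.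
by rewrite mulrDl mulrDr -!scalerAl -!scalerAr mul1r yy' !mulrA.
Qed.

Hypothesis qU : q \is a GRing.unit.

Let qVq : (q^-1)%:P * q%:P = 1 :> {poly K}.
Proof. by rewrite -polyCM mulVr. Qed.

Lemma ginv_shift (x : A) : ginv q x = q^-1 *: (x + 1) - 1.
Proof. by rewrite /ginv; linearize [:: x; (1 : A)]; ring: qVq. Qed.

Lemma mulr_ginv (x : A) : x ^+ 2 = (q - 1) *: x + q%:A -> x * ginv q x = 1.
Proof.
move=> x_sq; rewrite /ginv -scalerAr mulrBr -expr2 x_sq mulr_algr.
by linearize [:: x; (1 : A)]; ring: qVq.
Qed.

Lemma mulginvr (x : A) : x ^+ 2 = (q - 1) *: x + q%:A -> ginv q x * x = 1.
Proof.
move=> x_sq; rewrite /ginv -scalerAl mulrBl -expr2 x_sq mulr_algl.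
by linearize [:: x; (1 : A)]; ring: qVq.
Qed.

End Generator.

Section Trace.
Variables (K : idomainType) (A : algType K) (tau : A -> K).
Hypothesis tau_tr : is_trace tau.

Lemma trace0 : tau 0 = 0.
Proof.
by case: tau_tr => lin _; have := lin (-1) 0 0; rewrite scaler0 addr0 mulN1r addNr.
Qed.

Lemma traceD x y : tau (x + y) = tau x + tau y.
Proof. by case: tau_tr => lin _; rewrite -[x in LHS]scale1r lin mul1r. Qed.

Lemma traceZ c x : tau (c *: x) = c * tau x.
Proof. by case: tau_tr => lin _; rewrite -[c *: x]addr0 lin trace0 addr0. Qed.

Lemma traceB x y : tau (x - y) = tau x - tau y.
Proof. by rewrite traceD -scaleN1r traceZ mulN1r. Qed.

Lemma traceC x y : tau (x * y) = tau (y * x).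
Proof. by case: tau_tr. Qed.

End Trace.

Section MarkovTrace.
Variables (K : idomainType) (A : algType K) (tau : A -> K).
Hypothesis tau_tr : is_trace tau.
Variables a b : A.
Local Notation B := (in_subalg2 a b).

Lemma in_subalg2X x n : B x -> B (x ^+ n).
Proof. by move=> Bx; elim: n => [|n IH]; [apply: sub_one | rewrite exprS; apply: sub_mul]. Qed.

Lemma in_subalg2_ginv q x : B x -> B (ginv q x).
Proof.
move=> Bx; rewrite /ginv -scaleNr.
by apply/sub_scale/sub_add => //; apply/sub_scale/sub_one.
Qed.

Variable g : A.

Lemma markov_scale c m : markov a b g m -> markov a b g (c *: m).
Proof.
case=> x [y [eps [Bx [By ->]]]].
by exists (c *: x), y, eps; rewrite !scalerAl; split => //; apply: sub_scale.
Qed.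

Definition markov_trace (z : K) := exists Ms : seq (K * A),
  (forall m, m \in Ms -> markov a b g m.2) /\ z = \sum_(m <- Ms) m.1 * tau m.2.

Lemma markov_trace0 : markov_trace 0.
Proof. by exists [::]; rewrite big_nil. Qed.

Lemma markov_traceD z z' : markov_trace z -> markov_trace z' -> markov_trace (z + z').
Proof.
move=> [Ms [MsP ->]] [Ms' [Ms'P ->]]; exists (Ms ++ Ms'); split; last by rewrite big_cat.
by move=> m; rewrite mem_cat => /orP[]; [apply: MsP | apply: Ms'P].
Qed.

Lemma markov_traceZ c z : markov_trace z -> markov_trace (c * z).
Proof.
move=> [Ms [MsP ->]]; exists (map (fun m => (c * m.1, m.2)) Ms); split.
  by move=> _ /mapP[m /MsP m_markov ->].
by rewrite big_map mulr_sumr; apply: eq_bigr => m _; rewrite mulrA.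
Qed.

Lemma markov_traceB z z' : markov_trace z -> markov_trace z' -> markov_trace (z - z').
Proof. by move=> mz mz'; apply: markov_traceD => //; rewrite -mulN1r; apply: markov_traceZ. Qed.

Lemma markov_trace_elem x y (eps : bool) : B x -> B y -> markov_trace (tau (x * g ^+ eps * y)).
Proof.
move=> Bx By; exists [:: (1, x * g ^+ eps * y)]; rewrite big_seq1 mul1r; split => // m.
by rewrite inE => /eqP ->; exists x, y, eps.
Qed.

Lemma markov_trace_sub x : B x -> markov_trace (tau x).
Proof.
by move=> Bx; have := markov_trace_elem false (sub_one a b) Bx; rewrite mulr1 mul1r.
Qed.

Lemma markov_trace_shift x y : B x -> B y -> markov_trace (tau (x * (g + 1) * y)).
Proof.
move=> Bx By; rewrite mulrDr mulr1 mulrDl (traceD tau_tr).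
apply: markov_traceD; first by have := markov_trace_elem true Bx By; rewrite expr1.
by apply/markov_trace_sub/sub_mul.
Qed.

Lemma markov_traceP z : markov_trace z ->
  exists Ms : seq A, (forall m, m \in Ms -> markov a b g m) /\ z = tau (\sum_(m <- Ms) m).
Proof.
move=> [Ms [MsP ->]]; exists (map (fun m => m.1 *: m.2) Ms); split.
  by move=> _ /mapP[m /MsP m_markov ->]; apply: markov_scale.
rewrite big_map; elim: Ms {MsP} => [|m Ms IH]; first by rewrite !big_nil (trace0 tau_tr).
by rewrite !big_cons (traceD tau_tr) (traceZ tau_tr) IH.
Qed.

End MarkovTrace.

Section TL3.
Variables (K : idomainType) (q : K) (A : algType K) (g1 g2 g3 : A).
Hypothesis qU : q \is a GRing.unit.
Hypothesis rels : TL3_rels q g1 g2 g3.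

Let qVq : q^-1 * q = 1. Proof. by rewrite mulVr. Qed.
Let qVqP : (q^-1)%:P * q%:P = 1 :> {poly K}. Proof. by rewrite -polyCM qVq. Qed.

Lemma g1_sq : g1 ^+ 2 = (q - 1) *: g1 + q%:A.
Proof. by case: rels => _ _ _ -> //; rewrite !inE eqxx. Qed.
Lemma g2_sq : g2 ^+ 2 = (q - 1) *: g2 + q%:A.
Proof. by case: rels => _ _ _ -> //; rewrite !inE eqxx ?orbT. Qed.
Lemma g3_sq : g3 ^+ 2 = (q - 1) *: g3 + q%:A.
Proof. by case: rels => _ _ _ -> //; rewrite !inE eqxx ?orbT. Qed.

(* Locking keeps [e_i = g_i + 1] atomic under [rewrite] and [linearize]. *)
Definition e1 := locked (g1 + 1).
Definition e2 := locked (g2 + 1).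
Definition e3 := locked (g3 + 1).
Lemma e1E : e1 = g1 + 1. Proof. by rewrite /e1; unlock. Qed.
Lemma e2E : e2 = g2 + 1. Proof. by rewrite /e2; unlock. Qed.
Lemma e3E : e3 = g3 + 1. Proof. by rewrite /e3; unlock. Qed.
Lemma g1E : g1 = e1 - 1. Proof. by rewrite e1E addrK. Qed.
Lemma g2E : g2 = e2 - 1. Proof. by rewrite e2E addrK. Qed.
Lemma g3E : g3 = e3 - 1. Proof. by rewrite e3E addrK. Qed.

Lemma e1_sq : e1 * e1 = (q + 1) *: e1. Proof. by rewrite e1E (shift_sq g1_sq). Qed.
Lemma e2_sq : e2 * e2 = (q + 1) *: e2. Proof. by rewrite e2E (shift_sq g2_sq). Qed.
Lemma e3_sq : e3 * e3 = (q + 1) *: e3. Proof. by rewrite e3E (shift_sq g3_sq). Qed.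

Lemma e1e2e1 : e1 * e2 * e1 = q *: e1.
Proof. by case: rels => _ _ _ _ [V12 _ _]; rewrite e1E e2E (shift_tri g1_sq V12). Qed.
Lemma e1e3e1 : e1 * e3 * e1 = q *: e1.
Proof. by case: rels => _ _ _ _ [_ V13 _]; rewrite e1E e3E (shift_tri g1_sq V13). Qed.
Lemma e2e3e2 : e2 * e3 * e2 = q *: e2.
Proof. by case: rels => _ _ _ _ [_ _ V23]; rewrite e2E e3E (shift_tri g2_sq V23). Qed.
Lemma e2e1e2 : e2 * e1 * e2 = q *: e2.
Proof.
case: rels => br _ _ _ [V12 _ _].
by rewrite e2E e1E (shift_tri g2_sq (Vrel_sym br V12)).
Qed.
Lemma e3e1e3 : e3 * e1 * e3 = q *: e3.
Proof.
case: rels => _ br _ _ [_ V13 _].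
by rewrite e3E e1E (shift_tri g3_sq (Vrel_sym br V13)).
Qed.
Lemma e3e2e3 : e3 * e2 * e3 = q *: e3.
Proof.
case: rels => _ _ br _ [_ _ V23].
by rewrite e3E e2E (shift_tri g3_sq (Vrel_sym br V23)).
Qed.

Lemma ginv_g2 : ginv q g2 = q^-1 *: e2 - 1.
Proof. by rewrite e2E (ginv_shift qU). Qed.

Definition u := g2 * g3 * ginv q g2.

Lemma g3u : g3 * u = g2 * g3.
Proof.
case: rels => _ _ br _ _.
by rewrite /u !mulrA -br -(mulrA _ g2) (mulr_ginv qU g2_sq) mulr1.
Qed.

Lemma ug2 : u * g2 = g2 * g3.
Proof. by rewrite /u -mulrA (mulginvr qU g2_sq) mulr1. Qed.

Lemma u_sq : u ^+ 2 = (q - 1) *: u + q%:A.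
Proof. exact: conj_quadratic (mulginvr qU g2_sq) (mulr_ginv qU g2_sq) g3_sq. Qed.

Definition eu := locked (u + 1).
Lemma euE : eu = u + 1. Proof. by rewrite /eu; unlock. Qed.

Lemma eu_expand : eu = e2 - e2 * e3 - q^-1 *: (e3 * e2) + e3.
Proof.
rewrite euE /u ginv_g2 g2E g3E.
rewrite !(mulrDl, mulrDr, mulrBl, mulrBr, mul1r, mulr1, mulNr, mulrN).
rewrite -!scalerAr e2e3e2 e2_sq !scalerA.
by linearize [:: e2 * e3; e3 * e2; e2; e3; (1 : A)]; ring: qVqP.
Qed.

Lemma e2_mul_eu : e2 * eu = q *: e2 - q *: (e2 * e3).
Proof.
rewrite eu_expand !(mulrDr, mulrBr, mulrN) -!scalerAr !mulrA e2_sq e2e3e2 !scalerA.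
by rewrite -!scalerAl ?scalerA; linearize [:: e2 * e3; e2; (1 : A)]; ring: qVqP.
Qed.

Lemma eu_mul_e2 : eu * e2 = e2 - q^-1 *: (e3 * e2).
Proof.
rewrite eu_expand !(mulrDl, mulrBl, mulNr) -!scalerAl e2_sq e2e3e2.
rewrite (mul_sq_scale e2_sq e3) !scalerA.
by linearize [:: e3 * e2; e2; (1 : A)]; ring: qVqP.
Qed.

Lemma e3_from_eu : e3 = eu + e2 - q^-1 *: (e2 * eu) - eu * e2.
Proof.
rewrite e2_mul_eu eu_mul_e2 {1}eu_expand.
by linearize [:: e2 * e3; e3 * e2; e2; e3; (1 : A)]; ring: qVqP.
Qed.

(* The [q^-3] normalisation makes [Y_mul_e3e1] and [Y_mul_e1e3] below hold
   uniformly in [j]. *)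
Fixpoint Ypos (n : nat) : A := if n is n'.+1 then Ypos n' * e1 * e3 * e2 else e2.
Fixpoint Yneg (n : nat) : A :=
  if n is n'.+1 then q^-1 ^+ 3 *: (Yneg n' * e3 * e1 * e2) else e2.
Definition Y (j : int) : A := match j with Posz n => Ypos n | Negz n => Yneg n.+1 end.

Lemma Y_suffix_e2 j : exists z, Y j = z * e2.
Proof.
case: j => [[|n]|n] /=; first by exists 1; rewrite mul1r.
  by exists (Ypos n * e1 * e3).
by exists (q^-1 ^+ 3 *: (Yneg n * e3 * e1)); rewrite scalerAl.
Qed.

Lemma Y_rmul j w d : e2 * w = d *: e2 -> Y j * w = d *: Y j.
Proof. by move=> e2w; have [z ->] := Y_suffix_e2 j; rewrite -mulrA e2w scalerAr. Qed.

Lemma Y_mul_e2 j : Y j * e2 = (q + 1) *: Y j.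
Proof. exact/Y_rmul/e2_sq. Qed.
Lemma Y_mul_e1e2 j : Y j * e1 * e2 = q *: Y j.
Proof. by rewrite -mulrA; apply: Y_rmul; rewrite mulrA e2e1e2. Qed.
Lemma Y_mul_e3e2 j : Y j * e3 * e2 = q *: Y j.
Proof. by rewrite -mulrA; apply: Y_rmul; rewrite mulrA e2e3e2. Qed.

Lemma Y_mul_e3e1 j : Y j * e3 * e1 = (q * q) *: (Y (j - 1) * e1).
Proof.
have Yneg_e3e1 n : Yneg n * e3 * e1 = (q * q) *: (Yneg n.+1 * e1).
  rewrite /= -scalerAl (mul_tri_scale e1e2e1) !scalerA.
  by rewrite (_ : q * q * q^-1 ^+ 3 * q = 1) ?scale1r //; ring: qVq.
case: j => [[|n]|n].
- by rewrite (_ : Posz 0 - 1 = Negz 0) //; apply: (Yneg_e3e1 0%N).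
- rewrite (_ : Posz n.+1 - 1 = Posz n); last by lia.
  by rewrite /= (mul_tri_scale e3e2e3) -scalerAl (mul_tri_scale e1e3e1) scalerA.
- by rewrite (_ : Negz n - 1 = Negz n.+1); [apply: Yneg_e3e1 | lia].
Qed.

Lemma Y_mul_e1e3 j : Y j * e1 * e3 = q^-1 *: (Y (j + 1) * e3).
Proof.
have Yneg_e1e3 n : Yneg n.+1 * e1 * e3 = q^-1 *: (Yneg n * e3).
  rewrite /= -!scalerAl (mul_tri_scale e1e2e1) -scalerAl (mul_tri_scale e3e1e3) !scalerA.
  by congr (_ *: _); ring: qVq.
case: j => [n|[|n]].
- rewrite (_ : Posz n + 1 = Posz n.+1); last by lia.
  by rewrite /= (mul_tri_scale e3e2e3) scalerA qVq scale1r.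
- by rewrite (_ : Negz 0 + 1 = Posz 0) //; apply: (Yneg_e1e3 0%N).
- by rewrite (_ : Negz n.+1 + 1 = Negz n); [apply: Yneg_e1e3 | lia].
Qed.

Definition row j (a b c : K) := locked (a *: Y j + b *: (Y j * e1) + c *: (Y j * e3)).
Lemma rowE j a b c : row j a b c = a *: Y j + b *: (Y j * e1) + c *: (Y j * e3).
Proof. by rewrite /row; unlock. Qed.

Ltac linearize_rows i := rewrite ?rowE; linearize
  [:: Y (i - 1 - 1) * e1; Y (i - 1) * e1; Y i * e1; Y (i + 1) * e1; Y (i + 1 + 1) * e1;
      Y (i - 1 - 1) * e3; Y (i - 1) * e3; Y i * e3; Y (i + 1) * e3; Y (i + 1 + 1) * e3;
      Y (i - 1 - 1); Y (i - 1); Y i; Y (i + 1); Y (i + 1 + 1)].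

Lemma row_mul_e1 j a b c :
  row j a b c * e1 = row j 0 (a + (q + 1) * b) 0 + row (j - 1) 0 (q * q * c) 0.
Proof.
rewrite !rowE !mulrDl -!scalerAl (mul_sq_scale e1_sq) Y_mul_e3e1 !scalerA.
by linearize_rows j; ring.
Qed.

Lemma row_mul_e2 j a b c : row j a b c * e2 = (a * (q + 1) + b * q + c * q) *: Y j.
Proof.
rewrite !rowE !mulrDl -!scalerAl Y_mul_e2 Y_mul_e1e2 Y_mul_e3e2 !scalerA.
by linearize [:: Y j]; ring.
Qed.

Lemma row_mul_e3 j a b c :
  row j a b c * e3 = row j 0 0 (a + (q + 1) * c) + row (j + 1) 0 0 (q^-1 * b).
Proof.
rewrite !rowE !mulrDl -!scalerAl (mul_sq_scale e3_sq) Y_mul_e1e3 !scalerA.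
by linearize_rows j; ring.
Qed.

Definition rows3 i a0 b0 c0 a1 b1 c1 a2 b2 c2 :=
  row (i - 1) a0 b0 c0 + row i a1 b1 c1 + row (i + 1) a2 b2 c2.

Lemma rows3B i a0 b0 c0 a1 b1 c1 a2 b2 c2 a0' b0' c0' a1' b1' c1' a2' b2' c2' :
  rows3 i a0 b0 c0 a1 b1 c1 a2 b2 c2 - rows3 i a0' b0' c0' a1' b1' c1' a2' b2' c2' =
  rows3 i (a0 - a0') (b0 - b0') (c0 - c0') (a1 - a1') (b1 - b1') (c1 - c1')
          (a2 - a2') (b2 - b2') (c2 - c2').
Proof. by rewrite /rows3; linearize_rows i; ring. Qed.

Lemma rows3Z i k a0 b0 c0 a1 b1 c1 a2 b2 c2 :
  k *: rows3 i a0 b0 c0 a1 b1 c1 a2 b2 c2 =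
  rows3 i (k * a0) (k * b0) (k * c0) (k * a1) (k * b1) (k * c1) (k * a2) (k * b2) (k * c2).
Proof. by rewrite /rows3; linearize_rows i; ring. Qed.

(* The side conditions [c0 = 0] and [b2 = 0] keep the products in the window
   of rows [i - 1], [i], [i + 1]. *)
Lemma rows3_mul_g1 i a0 b0 c0 a1 b1 c1 a2 b2 c2 : c0 = 0 ->
  rows3 i a0 b0 c0 a1 b1 c1 a2 b2 c2 * (e1 - 1) =
  rows3 i (0 - a0) (a0 + (q + 1) * b0 + q * q * c1 - b0) (0 - c0)
          (0 - a1) (a1 + (q + 1) * b1 + q * q * c2 - b1) (0 - c1)
          (0 - a2) (a2 + (q + 1) * b2 - b2) (0 - c2).
Proof.
move=> ->; rewrite mulrBr mulr1 /rows3 !mulrDl !row_mul_e1.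
by rewrite (_ : i + 1 - 1 = i); [linearize_rows i; ring | lia].
Qed.

Lemma rows3_mul_g2 i a0 b0 c0 a1 b1 c1 a2 b2 c2 :
  rows3 i a0 b0 c0 a1 b1 c1 a2 b2 c2 * (e2 - 1) =
  rows3 i (a0 * (q + 1) + b0 * q + c0 * q - a0) (0 - b0) (0 - c0)
          (a1 * (q + 1) + b1 * q + c1 * q - a1) (0 - b1) (0 - c1)
          (a2 * (q + 1) + b2 * q + c2 * q - a2) (0 - b2) (0 - c2).
Proof. by rewrite mulrBr mulr1 /rows3 !mulrDl !row_mul_e2; linearize_rows i; ring. Qed.

Lemma rows3_mul_g3 i a0 b0 c0 a1 b1 c1 a2 b2 c2 : b2 = 0 ->
  rows3 i a0 b0 c0 a1 b1 c1 a2 b2 c2 * (e3 - 1) =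
  rows3 i (0 - a0) (0 - b0) (a0 + (q + 1) * c0 - c0)
          (0 - a1) (0 - b1) (a1 + (q + 1) * c1 + q^-1 * b0 - c1)
          (0 - a2) (0 - b2) (a2 + (q + 1) * c2 + q^-1 * b1 - c2).
Proof.
move=> ->; rewrite mulrBr mulr1 /rows3 !mulrDl !row_mul_e3.
by rewrite (_ : i - 1 + 1 = i); [linearize_rows i; ring | lia].
Qed.

Lemma rows3_mul_ginv2 i a0 b0 c0 a1 b1 c1 a2 b2 c2 :
  rows3 i a0 b0 c0 a1 b1 c1 a2 b2 c2 * (q^-1 *: e2 - 1) =
  rows3 i (q^-1 * (a0 * (q + 1) + b0 * q + c0 * q) - a0) (- b0) (- c0)
          (q^-1 * (a1 * (q + 1) + b1 * q + c1 * q) - a1) (- b1) (- c1)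
          (q^-1 * (a2 * (q + 1) + b2 * q + c2 * q) - a2) (- b2) (- c2).
Proof. by rewrite mulrBr mulr1 /rows3 -scalerAr !mulrDl !row_mul_e2; linearize_rows i; ring. Qed.

Definition P := g1 * u.

Lemma P_rows : P = (e1 - 1) * (e2 - 1) * (e3 - 1) * (q^-1 *: e2 - 1).
Proof. by rewrite /P /u ginv_g2 g1E g2E g3E !mulrA. Qed.

Definition W j := row j 1 0 (-1) + row (j - 1) 0 q 0.

Lemma W_rows3 i : W i = rows3 i 0 q 0 1 0 (-1) 0 0 0.
Proof. by rewrite /W /rows3; linearize_rows i; ring. Qed.

Lemma W_rows3S i : W (i + 1) = rows3 i 0 0 0 0 q 0 1 0 (-1).
Proof. by rewrite /W /rows3 (_ : i + 1 - 1 = i); [linearize_rows i; ring | lia]. Qed.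

Lemma W_mul_P i : W i * P = (- q^-1) *: W (i + 1).
Proof.
rewrite P_rows !mulrA W_rows3 W_rows3S.
rewrite rows3_mul_g1 // rows3_mul_g2 rows3_mul_g3; last by ring.
rewrite rows3_mul_ginv2 rows3Z.
by congr rows3; ring: qVq.
Qed.

Lemma e2_mul_P : e2 * P - e2 = (- q^-1) *: W 1.
Proof.
have e2_rows3 : e2 = rows3 0 0 0 0 1 0 0 0 0 0
  by rewrite /rows3 !rowE !scale0r !addr0 !add0r scale1r.
rewrite e2_rows3 (_ : (1 : int) = 0 + 1) // W_rows3S P_rows !mulrA.
rewrite rows3_mul_g1 // rows3_mul_g2 rows3_mul_g3; last by ring.
rewrite rows3_mul_ginv2 rows3B rows3Z.
by congr rows3; ring: qVq.
Qed.

Definition v := ginv q u * ginv q g1.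

Lemma P_mul_v : P * v = 1.
Proof.
by rewrite /P /v mulrA -(mulrA g1) (mulr_ginv qU u_sq) mulr1 (mulr_ginv qU g1_sq).
Qed.

Lemma e2P_step n : e2 * P ^+ n.+1 - e2 * P ^+ n = (- q^-1) ^+ n.+1 *: W n.+1.
Proof.
elim: n => [|n IH]; first by rewrite expr1 expr0 mulr1 e2_mul_P.
have -> : e2 * P ^+ n.+2 - e2 * P ^+ n.+1 = (e2 * P ^+ n.+1 - e2 * P ^+ n) * P.
  by rewrite mulrBl -!mulrA -!exprSr.
rewrite IH -scalerAl W_mul_P scalerA -exprSr.
by rewrite (_ : n.+1%:Z + 1 = n.+2); last by lia.
Qed.

Lemma W0E : W 0 = e2 - e2 * v.
Proof.
have WP : (e2 - W 0) * P = e2.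
  rewrite mulrBl W_mul_P add0r -e2_mul_P.
  by linearize [:: e2 * P; e2]; ring.
have := congr1 (fun x => x * v) WP; rewrite /= -mulrA P_mul_v mulr1 => <-.
by linearize [:: W 0; e2]; ring.
Qed.

Lemma e2v_step n : e2 * v ^+ n - e2 * v ^+ n.+1 = (- q) ^+ n *: W (- n%:Z).
Proof.
elim: n => [|n IH]; first by rewrite expr0 expr1 mulr1 scale1r W0E.
have -> : e2 * v ^+ n.+1 - e2 * v ^+ n.+2 = (e2 * v ^+ n - e2 * v ^+ n.+1) * v.
  by rewrite mulrBl -!mulrA -!exprSr.
rewrite IH -scalerAl.
have Wv : W (- n%:Z) * v = (- q) *: W (- n.+1%:Z).
  have := congr1 (fun x => x * v) (W_mul_P (- n.+1%:Z)).
  rewrite /= -mulrA P_mul_v mulr1 (_ : - n.+1%:Z + 1 = - n%:Z); last by lia.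
  move=> ->; rewrite -scalerAl scalerA (_ : - q * - q^-1 = 1) ?scale1r //.
  by ring: qVq.
by rewrite Wv scalerA -exprSr.
Qed.

Lemma W_mul_e2 j : W j * e2 = Y j + (q * q) *: Y (j - 1).
Proof. by rewrite W_rows3 /rows3 !mulrDl !row_mul_e2; linearize_rows j; ring. Qed.

Local Notation B := (in_subalg2 g1 u).

Lemma B_P : B P. Proof. exact: sub_mul (sub_a _ _) (sub_b _ _). Qed.
Lemma B_v : B v.
Proof. exact: sub_mul (in_subalg2_ginv _ (sub_b _ _)) (in_subalg2_ginv _ (sub_a _ _)). Qed.
Lemma B_eu : B eu. Proof. by rewrite euE; apply/sub_add/sub_one/sub_b. Qed.

Inductive in_rowspan : A -> Prop :=
  | rowspan_row j a b c : in_rowspan (row j a b c)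
  | rowspan0 : in_rowspan 0
  | rowspanD x y : in_rowspan x -> in_rowspan y -> in_rowspan (x + y)
  | rowspanZ k x : in_rowspan x -> in_rowspan (k *: x).

Lemma rowspanB x y : in_rowspan x -> in_rowspan y -> in_rowspan (x - y).
Proof. by move=> x_row y_row; apply: rowspanD => //; rewrite -scaleN1r; apply: rowspanZ. Qed.

Lemma Y_rowspan j : in_rowspan (Y j).
Proof.
have -> : Y j = row j 1 0 0 by rewrite rowE !scale0r !addr0 scale1r.
exact: rowspan_row.
Qed.

Definition row_stable (y : A) := forall x, in_rowspan x -> in_rowspan (x * y).

Lemma row_stable_row y : (forall j a b c, in_rowspan (row j a b c * y)) -> row_stable y.
Proof.
move=> y_row x; elim=> [j a b c|||k x' _ IH]; first exact: y_row.
- by rewrite mul0r; apply: rowspan0.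
- by move=> x1 x2 _ IH1 _ IH2; rewrite mulrDl; apply: rowspanD.
- by rewrite -scalerAl; apply: rowspanZ.
Qed.

Lemma row_stable1 : row_stable 1.
Proof. by move=> x; rewrite mulr1. Qed.

Lemma row_stableD y y' : row_stable y -> row_stable y' -> row_stable (y + y').
Proof. by move=> sy sy' x x_row; rewrite mulrDr; apply: rowspanD; [apply: sy | apply: sy']. Qed.

Lemma row_stableZ k y : row_stable y -> row_stable (k *: y).
Proof. by move=> sy x x_row; rewrite -scalerAr; apply/rowspanZ/sy. Qed.

Lemma row_stableM y y' : row_stable y -> row_stable y' -> row_stable (y * y').
Proof. by move=> sy sy' x x_row; rewrite mulrA; apply/sy'/sy. Qed.

Lemma row_stable_shift y : row_stable (y + 1) -> row_stable y.
Proof.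
by move=> sy x x_row; rewrite -(addrK 1 y) mulrBr mulr1; apply: rowspanB => //; apply: sy.
Qed.

Lemma row_stable_e1 : row_stable e1.
Proof.
by apply: row_stable_row => j a b c; rewrite row_mul_e1; apply: rowspanD; apply: rowspan_row.
Qed.
Lemma row_stable_e2 : row_stable e2.
Proof. by apply: row_stable_row => j a b c; rewrite row_mul_e2; apply/rowspanZ/Y_rowspan. Qed.
Lemma row_stable_e3 : row_stable e3.
Proof.
by apply: row_stable_row => j a b c; rewrite row_mul_e3; apply: rowspanD; apply: rowspan_row.
Qed.

Lemma row_stable_B y : B y -> row_stable y.
Proof.
have [s1 s2 s3] : [/\ row_stable g1, row_stable g2 & row_stable g3].
  by split; apply: row_stable_shift; rewrite -?e1E -?e2E -?e3E;
    [apply: row_stable_e1 | apply: row_stable_e2 | apply: row_stable_e3].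
elim=> [|||y1 y2 _ IH1 _ IH2|k y' _ IH|y1 y2 _ IH1 _ IH2].
- exact: row_stable1.
- exact: s1.
- rewrite /u ginv_g2; apply: row_stableM; first exact: row_stableM.
  apply: row_stableD; first exact/row_stableZ/row_stable_e2.
  by rewrite -scaleN1r; apply/row_stableZ/row_stable1.
- exact: row_stableD.
- exact: row_stableZ.
- exact: row_stableM.
Qed.

Hypothesis q1U : (q + 1) \is a GRing.unit.
Variable tau : A -> K.
Hypothesis tau_tr : is_trace tau.
Local Notation Mk := (markov_trace tau g1 u g2).

Lemma markov_trace_Be2B x y : B x -> B y -> Mk (tau (x * e2 * y)).
Proof. by rewrite e2E; apply: markov_trace_shift. Qed.

Lemma markov_trace_e2B x : B x -> Mk (tau (e2 * x)).
Proof. by move=> Bx; have := markov_trace_Be2B (sub_one _ _) Bx; rewrite mul1r. Qed.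

Lemma markov_trace_e2Be2 x : B x -> Mk (tau (e2 * x * e2)).
Proof.
move=> Bx; rewrite (traceC tau_tr) mulrA e2_sq -scalerAl (traceZ tau_tr).
exact/markov_traceZ/markov_trace_e2B.
Qed.

Lemma trace_W_e2 j : tau (W j * e2) = tau (Y j) + q * q * tau (Y (j - 1)).
Proof. by rewrite W_mul_e2 (traceD tau_tr) (traceZ tau_tr). Qed.

Lemma markov_trace_Ypos (n : nat) : Mk (tau (Y n)).
Proof.
elim: n => [|n IH]; first by rewrite /= -[e2]mulr1; apply/markov_trace_e2B/sub_one.
have step := congr1 (fun x => tau (x * e2)) (e2P_step n).
rewrite /= mulrBl (traceB tau_tr) -scalerAl (traceZ tau_tr) trace_W_e2 in step.
rewrite (_ : n.+1%:Z - 1 = n%:Z) in step; last by lia.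
have -> : tau (Y n.+1) = (- q) ^+ n.+1 *
    (tau (e2 * P ^+ n.+1 * e2) - tau (e2 * P ^+ n * e2)) - q * q * tau (Y n).
  rewrite step mulrA -exprMn mulrNN mulrV // expr1n; ring.
apply: markov_traceB; last exact: markov_traceZ.
by apply/markov_traceZ; apply: markov_traceB; apply/markov_trace_e2Be2/in_subalg2X/B_P.
Qed.

Lemma markov_trace_Yneg (n : nat) : Mk (tau (Y (- n%:Z))).
Proof.
elim: n => [|n IH]; first by rewrite /= -[e2]mulr1; apply/markov_trace_e2B/sub_one.
have step := congr1 (fun x => tau (x * e2)) (e2v_step n).
rewrite /= mulrBl (traceB tau_tr) -scalerAl (traceZ tau_tr) trace_W_e2 in step.
rewrite (_ : - n%:Z - 1 = - n.+1%:Z) in step; last by lia.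
have -> : tau (Y (- n.+1%:Z)) = q^-1 * q^-1 * ((- q^-1) ^+ n *
    (tau (e2 * v ^+ n * e2) - tau (e2 * v ^+ n.+1 * e2)) - tau (Y (- n%:Z))).
  rewrite step mulrA -exprMn mulrNN mulVr // expr1n; ring: qVq.
apply/markov_traceZ/markov_traceB/IH/markov_traceZ.
by apply: markov_traceB; apply/markov_trace_e2Be2/in_subalg2X/B_v.
Qed.

Lemma markov_trace_Y j : Mk (tau (Y j)).
Proof.
case: j => n; first exact: markov_trace_Ypos.
by have := markov_trace_Yneg n.+1; rewrite (_ : - n.+1%:Z = Negz n) //; lia.
Qed.

Lemma markov_trace_rowspan_e2 x : in_rowspan x -> Mk (tau (x * e2)).
Proof.
elim=> [j a b c|||k y _ IH].
- by rewrite row_mul_e2 (traceZ tau_tr); apply/markov_traceZ/markov_trace_Y.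
- by rewrite mul0r (trace0 tau_tr); apply: markov_trace0.
- by move=> y z _ IH1 _ IH2; rewrite mulrDl (traceD tau_tr); apply: markov_traceD.
- by rewrite -scalerAl (traceZ tau_tr); apply: markov_traceZ.
Qed.

Lemma markov_trace_corner a : row_stable a -> Mk (tau (e2 * a * e2)).
Proof. by move=> sa; apply/markov_trace_rowspan_e2/sa/(Y_rowspan 0). Qed.

Lemma markov_trace_e2Be2B w w' : B w -> B w' -> Mk (tau (e2 * w * e2 * w')).
Proof.
move=> Bw Bw'.
have -> : tau (e2 * w * e2 * w') = (q + 1)^-1 * tau (e2 * (w * e2 * w') * e2).
  rewrite [in RHS](traceC tau_tr) !mulrA e2_sq -!scalerAl (traceZ tau_tr).
  by rewrite mulrA mulVr ?mul1r.
apply/markov_traceZ/markov_trace_corner.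
by apply/row_stableM/row_stable_B/Bw'; apply/row_stableM/row_stable_e2/row_stable_B.
Qed.

Lemma markov_trace_e3B x : B x -> Mk (tau (e3 * x)).
Proof.
move=> Bx; have Beux : B (eu * x) by apply/sub_mul/Bx/B_eu.
rewrite e3_from_eu !mulrBl mulrDl !(traceB tau_tr) (traceD tau_tr) -scalerAl (traceZ tau_tr).
apply: markov_traceB; last exact/markov_trace_Be2B/Bx/B_eu.
apply: markov_traceB; last by apply: markov_traceZ; rewrite -mulrA; apply: markov_trace_e2B.
by apply: markov_traceD; [apply: markov_trace_sub | apply: markov_trace_e2B].
Qed.

Lemma markov_trace_e3Be2B x y : B x -> B y -> Mk (tau (e3 * x * e2 * y)).
Proof.
move=> Bx By; have Beux : B (eu * x) by apply/sub_mul/Bx/B_eu.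
have Byeu : B (y * eu) by apply/sub_mul/B_eu.
rewrite e3_from_eu !(mulrBl, mulrDl) !(traceB tau_tr) (traceD tau_tr) -!scalerAl (traceZ tau_tr).
apply: markov_traceB; last first.
  by rewrite -!mulrA (traceC tau_tr) !mulrA -(mulrA _ y); apply: markov_trace_e2Be2B.
apply: markov_traceB; last first.
  by apply: markov_traceZ; rewrite -(mulrA e2 eu); apply: markov_trace_e2Be2B.
by apply: markov_traceD; [apply: markov_trace_Be2B | apply: markov_trace_e2Be2B].
Qed.

Lemma markov_trace_g3Bg2B x y : B x -> B y -> Mk (tau (g3 * x * g2 * y)).
Proof.
move=> Bx By.
have -> : g3 * x * g2 * y = e3 * x * e2 * y - e3 * (x * y) - x * e2 * y + x * y.
  rewrite g3E g2E !(mulrBl, mulrBr, mul1r, mulr1, mulrA).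
  by linearize [:: e3 * x * e2 * y; e3 * x * y; x * e2 * y; x * y]; ring.
rewrite (traceD tau_tr) !(traceB tau_tr).
apply: markov_traceD; last exact/markov_trace_sub/sub_mul.
apply: markov_traceB; last exact: markov_trace_Be2B.
apply: markov_traceB; first exact: markov_trace_e3Be2B.
exact/markov_trace_e3B/sub_mul.
Qed.

Lemma markov_trace_word s r : Mk (tau (g3 * u * P ^+ s * g3 * P ^+ r)).
Proof.
have -> : tau (g3 * u * P ^+ s * g3 * P ^+ r) = tau (g3 * (P ^+ r * u) * g2 * P ^+ s).
  by rewrite g3u -(mulrA _ g3 (P ^+ r)) (traceC tau_tr) -ug2 !mulrA.
apply: markov_trace_g3Bg2B; last exact/in_subalg2X/B_P.
exact/sub_mul/sub_b/in_subalg2X/B_P.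
Qed.

End TL3.

Theorem lemma4p8 (K : idomainType) (q : K)
  (charK0 : [pchar K] =i pred0)
  (q_unit : q \is a GRing.unit) (q_sq : exists t : K, q = t ^+ 2)
  (q1_unit : (q + 1) \is a GRing.unit)
  (A : algType K) (g1 g2 g3 : A)
  (rels : TL3_rels q g1 g2 g3)
  (tau : A -> K) (tau_tr : is_trace tau)
  (r s : nat) (r_pos : (0 < r)%N) (r_le_s : (r <= s)%N) :
  let X := g2 * g1 * g3 in
  let u := g2 * g3 * ginv q g2 in
  exists (h : nat) (c : nat -> A) (Ms : seq A),
    (h <= s)%N /\
    (forall j, (j <= h)%N -> in_subalg2 g1 u (c j)) /\
    (forall m, m \in Ms -> markov g1 u g2 m) /\
    tau (g3 * u * (g1 * u) ^+ s * g3 * (g1 * u) ^+ r)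
    = tau (\sum_(0 <= j < h.+1) c j * X ^+ j + \sum_(m <- Ms) m).
Proof.
move=> X u.
have := markov_trace_word q_unit rels q1_unit tau_tr s r.
move=> /(markov_traceP tau_tr) [Ms [Ms_markov ->]].
exists 0%N, (fun=> 0), Ms; split=> //; split.
  by move=> j _; rewrite -(scale0r 1); apply/sub_scale/sub_one.
by split=> //; rewrite big_nat1 mul0r add0r.
Qed.
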